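(* Let $q=4$ and $n\geq 2$, and let $c>0$ be a real number such that $k=\frac{3n}{8}(\log(3n)+c)$ is an integer. Then $$\Vert \nu_n^{*k}-\pi_n\Vert_{TV}^2\leq \frac94\left(e^{e^{-c}}-1\right).$$
   Context: For integers $n\geq1$, $q\geq2$, the Hamming scheme $H(n,q)$ is the graph with vertex set $X_n=\{0,1,\dots,q-1\}^n$ in which $x$ and $x'$ are adjacent ($x\sim x'$) iff they differ in exactly one coordinate. The simple random walk has transition probability $p_n(x,x')=\frac{1}{n(q-1)}$ if $x\sim x'$ and $0$ otherwise. Let $p_n^{(k)}$ denote the $k$-step transition probability ($p_n^{(0)}(x,x')=\delta_{x,x'}$), $x^{(0)}=(0,\dots,0)$, and $\nu_n^{*k}(x)=p_n^{(k)}(x^{(0)},x)$. $\pi_n$ is the uniform probability measure on $X_n$. For measures $\mu,\nu$ on $X_n$, $\Vert\mu-\nu\Vert_{TV}=\max_{S\subset X_n}|\mu(S)-\nu(S)|$. *)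

From mathcomp Require Import all_boot.
From Stdlib Require Import Reals.
Set Implicit Arguments. Unset Strict Implicit. Unset Printing Implicit Defensive.

Definition Xn (n q : nat) : finType := {ffun 'I_n -> 'I_q}.

Definition hadj (n q : nat) (x x' : Xn n q) : bool :=
  #|[set i : 'I_n | x i != x' i]| == 1%N.

Definition pstep (n q : nat) (x x' : Xn n q) : R :=
  if hadj x x' then (1 / (INR n * INR (q - 1)))%R else 0%R.

Fixpoint pkstep (n q k : nat) (x x' : Xn n q) {struct k} : R :=
  match k with
  | O => if x == x' then 1%R else 0%R
  | S k' => \big[Rplus/0%R]_(z : Xn n q) (pkstep k' x z * pstep z x')%R
  end.

(* x^{(0)} = (0,...,0); requires q >= 1 to make sense, we write q = q'.+1 *)
Definition x0 (n q' : nat) : Xn n q'.+1 := [ffun _ => ord0].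

Definition nuk (n q' k : nat) (x : Xn n q'.+1) : R := pkstep k (x0 n q') x.

Definition unif (n q : nat) (x : Xn n q) : R := (1 / INR (q ^ n))%R.

Definition tvdist (T : finType) (mu nu : T -> R) : R :=
  \big[Rmax/0%R]_(S : {set T})
     Rabs (\big[Rplus/0%R]_(x in S) mu x - \big[Rplus/0%R]_(x in S) nu x)%R.

From HB Require Import structures.
From mathcomp Require Import all_boot.
From Stdlib Require Import Reals Lra.
Set Implicit Arguments. Unset Strict Implicit. Unset Printing Implicit Defensive.
Set Warnings "-redundant-canonical-projection".

Local Open Scope R_scope.

(* The walk on H(n,4) is diagonalised by the Walsh characters of ((Z/2)^2)^n: the
   character indexed by s is an eigenfunction with eigenvalue 1 - 4|s|/(3n), where |s| is
   the Hamming weight of s.  So the Fourier coefficients of nu^{*k} - pi are these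
   eigenvalues to the power k (and 0 at s = 0).  Cauchy-Schwarz against the centred
   indicator of a set S and Plancherel give
   |nu^{*k}(S) - pi(S)|^2 <= 1/4 sum_{s<>0} lambda_s^{2k}.
   Since lambda_s >= -1/3, each term is at most exp(-8k|s|/(3n)) + 9^{-k}, and the sum of
   these is (1 + 3 e^{-8k/(3n)})^n - 1 + 4^n 9^{-k} <= 9 (e^{e^{-c}} - 1) for the given k. *)

HB.instance Definition _ := Monoid.isComLaw.Build R 0 Rplus
  (fun x y z => esym (Rplus_assoc x y z)) Rplus_comm Rplus_0_l.
HB.instance Definition _ := Monoid.isComLaw.Build R 1 Rmult
  (fun x y z => esym (Rmult_assoc x y z)) Rmult_comm Rmult_1_l.
HB.instance Definition _ := Monoid.isMulLaw.Build R 0 Rmult Rmult_0_l Rmult_0_r.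
HB.instance Definition _ :=
  Monoid.isAddLaw.Build R Rmult Rplus Rmult_plus_distr_r Rmult_plus_distr_l.

Lemma sumRB (I : Type) (r : seq I) (P : pred I) (F G : I -> R) :
  \big[Rplus/0]_(i <- r | P i) (F i - G i) =
  \big[Rplus/0]_(i <- r | P i) F i - \big[Rplus/0]_(i <- r | P i) G i.
Proof. by rewrite /Rminus big_split (big_morph Ropp Ropp_plus_distr Ropp_0). Qed.

Section FiniteRealSums.
Variable T : finType.
Implicit Types (A : {pred T}) (F G : T -> R).

Lemma sumR_const A c : \big[Rplus/0]_(x in A) c = INR #|A| * c.
Proof.
rewrite big_const; elim: #|A| => [|m IH]; first by rewrite /=; lra.
by rewrite iterS IH S_INR; lra.
Qed.

Lemma prodR_const A c : \big[Rmult/1]_(x in A) c = c ^ #|A|.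
Proof. by rewrite big_const; elim: #|A| => //= m ->. Qed.

Lemma sumR_ge0 F : (forall x, 0 <= F x) -> 0 <= \big[Rplus/0]_x F x.
Proof. by move=> F_ge0; apply: big_ind => // *; lra. Qed.

Lemma ler_sumR F G :
  (forall x, F x <= G x) -> \big[Rplus/0]_x F x <= \big[Rplus/0]_x G x.
Proof. by move=> FG; apply: big_ind2 => // *; lra. Qed.

(* Lagrange's identity: 2 (A B - P^2) is the sum of all (F x G y - F y G x)^2. *)
Lemma sumR_Cauchy_Schwarz F G :
  (\big[Rplus/0]_x (F x * G x)) ^ 2 <=
  \big[Rplus/0]_x (F x * F x) * \big[Rplus/0]_x (G x * G x).
Proof.
set A := \big[Rplus/0]_x (F x * F x); set B := \big[Rplus/0]_x (G x * G x).
set P := \big[Rplus/0]_x (F x * G x).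
have lagrange : \big[Rplus/0]_x \big[Rplus/0]_y (F x * G y - F y * G x) ^ 2
                = 2 * (A * B - P * P).
  transitivity (\big[Rplus/0]_x \big[Rplus/0]_y
     (F x * F x * (G y * G y) + G x * G x * (F y * F y)
      - 2 * (F x * G x) * (F y * G y))).
    by apply: eq_bigr => x _; apply: eq_bigr => y _; ring.
  under eq_bigr do rewrite sumRB big_split -!big_distrr /=.
  rewrite sumRB big_split -!big_distrl -big_distrr /= -/A -/B -/P; ring.
have : 0 <= 2 * (A * B - P * P).
  by rewrite -lagrange; apply: sumR_ge0 => x; apply: sumR_ge0 => y; apply: pow2_ge_0.
simpl; lra.
Qed.

Lemma sumR_indicator (A : {set T}) : \big[Rplus/0]_x (if x \in A then 1 else 0) = INR #|A|.
Proof. by rewrite -big_mkcond sumR_const Rmult_1_r. Qed.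

End FiniteRealSums.

Lemma INR_expn a b : INR (expn a b) = INR a ^ b.
Proof. by elim: b => [|b IH]; rewrite ?expn0 // expnS -multE mult_INR IH. Qed.

Lemma tvdist_sqr_le (T : finType) (mu nu : T -> R) (B : R) :
  (forall S : {set T},
    (\big[Rplus/0]_(x in S) mu x - \big[Rplus/0]_(x in S) nu x) ^ 2 <= B) ->
  tvdist mu nu ^ 2 <= B.
Proof.
move=> sqr_le_B.
have B_ge0 : 0 <= B by have := sqr_le_B set0; rewrite !big_set0 /=; lra.
have tv_bounds : 0 <= tvdist mu nu <= sqrt B.
  apply: (big_ind (fun v => 0 <= v <= sqrt B)) => [|u v ? ?|S _].
  - by split; [lra | apply: sqrt_pos].
  - by split; [apply: Rle_trans (Rmax_l u v) | apply: Rmax_lub]; lra.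
  - split; first exact: Rabs_pos.
    rewrite -sqrt_Rsqr_abs; apply: sqrt_le_1_alt; rewrite /Rsqr.
    by have := sqr_le_B S; rewrite /= Rmult_1_r.
by rewrite -(pow2_sqrt B) //; apply: pow_incr.
Qed.

(* Cauchy-Schwarz against the centred indicator of [S], which has constant square 1/4. *)
Lemma sqr_sum_in_le_card (T : finType) (d : T -> R) (S : {set T}) :
  \big[Rplus/0]_x d x = 0 ->
  (\big[Rplus/0]_(x in S) d x) ^ 2 <= INR #|T| / 4 * \big[Rplus/0]_x (d x * d x).
Proof.
move=> sum_d0.
pose h x := (if x \in S then 1 else 0) - / 2.
have -> : \big[Rplus/0]_(x in S) d x = \big[Rplus/0]_x (h x * d x).
  have -> : \big[Rplus/0]_x (h x * d x) =
      \big[Rplus/0]_x (if x \in S then d x else 0) - / 2 * \big[Rplus/0]_x d x.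
    by rewrite big_distrr /= -sumRB; apply: eq_bigr => x _; rewrite /h; case: (x \in S); ring.
  by rewrite sum_d0 -big_mkcond /=; ring.
have -> : INR #|T| / 4 = \big[Rplus/0]_x (h x * h x).
  rewrite (eq_bigr (fun _ => / 4)) ?sumR_const; first by rewrite /Rdiv.
  by move=> x _; rewrite /h; case: (x \in S); field.
exact: sumR_Cauchy_Schwarz.
Qed.

Section OrthogonalExpansion.
Variables (S T : finType) (chi : S -> T -> R) (N : R).
Hypothesis N_neq0 : N <> 0.
Hypothesis chi_orth : forall x y,
  \big[Rplus/0]_s (chi s x * chi s y) = if x == y then N else 0.

Definition fourier (f : T -> R) (s : S) : R := \big[Rplus/0]_x (f x * chi s x).

Lemma fourier_inversion f x : \big[Rplus/0]_s (fourier f s * chi s x) = N * f x.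
Proof.
transitivity (\big[Rplus/0]_s \big[Rplus/0]_y (f y * (chi s y * chi s x))).
  by apply: eq_bigr => s _; rewrite big_distrl; apply: eq_bigr => y _ /=; ring.
rewrite exchange_big /=.
under eq_bigr do rewrite -big_distrr /= chi_orth.
rewrite (bigD1 x) //= eqxx big1 => [|y /negPf ->]; ring.
Qed.

Lemma plancherel f :
  \big[Rplus/0]_x (f x * f x) = / N * \big[Rplus/0]_s (fourier f s * fourier f s).
Proof.
transitivity (/ N * \big[Rplus/0]_x (f x * \big[Rplus/0]_s (fourier f s * chi s x))).
  rewrite big_distrr; apply: eq_bigr => x _ /=; rewrite fourier_inversion.
  by field.
congr (_ * _); under eq_bigr do rewrite big_distrr /=.
rewrite exchange_big; apply: eq_bigr => s _.
have -> : fourier f s * fourier f s =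
          fourier f s * \big[Rplus/0]_x (f x * chi s x) by [].
by rewrite big_distrr; apply: eq_bigr => x _ /=; ring.
Qed.

End OrthogonalExpansion.

Definition fupd (I : finType) (A : Type) (x : {ffun I -> A}) (i : I) (a : A) :=
  [ffun j => if j == i then a else x j].

Section ProductCharacters.
Variables (I A B : finType) (w : A -> B -> R).

Definition prod_char (s : {ffun I -> A}) (x : {ffun I -> B}) : R :=
  \big[Rmult/1]_i w (s i) (x i).

Lemma prod_char_orth N :
  (forall b b', \big[Rplus/0]_a (w a b * w a b') = if b == b' then N else 0) ->
  forall x y, \big[Rplus/0]_s (prod_char s x * prod_char s y) =
              if x == y then N ^ #|I| else 0.
Proof.
move=> w_orth x y.
transitivity (\big[Rplus/0]_(s : {ffun I -> A})
                \big[Rmult/1]_i (w (s i) (x i) * w (s i) (y i))).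
  by apply: eq_bigr => s _; rewrite /prod_char big_split.
rewrite -(bigA_distr_bigA (fun i a => w a (x i) * w a (y i))).
under eq_bigr do rewrite w_orth.
case: eqP => [<-|/eqP x_neq_y]; first by under eq_bigr do rewrite eqxx; rewrite prodR_const.
have [i xi_neq_yi] : exists i, x i != y i.
  apply/existsP; apply: contraR x_neq_y => /existsPn xy.
  by apply/eqP/ffunP => i; apply/eqP/negPn.
by rewrite (bigD1 i) //= (negPf xi_neq_yi) Rmult_0_l.
Qed.

Lemma prod_char_fupd s x i b :
  (forall a b, w a b * w a b = 1) ->
  prod_char s (fupd x i b) = w (s i) b * w (s i) (x i) * prod_char s x.
Proof.
move=> w_sqr; rewrite /prod_char (bigD1 i) //= [in RHS](bigD1 i) //= ffunE eqxx.
rewrite (eq_bigr (fun j => w (s j) (x j))) => [|j /negPf j_neq_i]; last first.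
  by rewrite ffunE j_neq_i.
by rewrite -Rmult_assoc (Rmult_assoc (w _ b)) w_sqr Rmult_1_r.
Qed.

End ProductCharacters.

Section HammingGraph.
Variables n q : nat.
Implicit Types x z : Xn n q.

Lemma diff_set1 z x i :
  ([set j | z j != x j] == [set i]) = (x i != z i) && (x == fupd z i (x i)).
Proof.
apply/eqP/andP => [diff_i | [xi_neq_zi /eqP ->]].
  have diffE j : (z j != x j) = (j == i) by move/setP: diff_i => /(_ j); rewrite !inE.
  split; first by rewrite eq_sym diffE.
  apply/eqP/ffunP => j; rewrite ffunE; case: (eqVneq j i) => [-> //|j_neq_i].
  by apply/eqP; rewrite eq_sym; apply/negbNE; rewrite diffE j_neq_i.
apply/setP => j; rewrite !inE !ffunE.
by case: (eqVneq j i) => [->|]; rewrite ?eqxx ?(eq_sym (z i)).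
Qed.

Lemma sum_hadj z (g : Xn n q -> R) :
  \big[Rplus/0]_x (if hadj z x then g x else 0) =
  \big[Rplus/0]_i \big[Rplus/0]_(b | b != z i) g (fupd z i b).
Proof.
have hadjE x : (if hadj z x then g x else 0) =
    \big[Rplus/0]_i (if [set j | z j != x j] == [set i] then g x else 0).
  rewrite /hadj; case: cards1P => [[i0 ->]|no_i0].
    rewrite (bigD1 i0) //= eqxx big1 ?Rplus_0_r // => i i_neq_i0.
    by rewrite (inj_eq set1_inj) eq_sym (negPf i_neq_i0).
  by rewrite big1 // => i _; case: eqP => // diff_i; case: no_i0; exists i.
under eq_bigr do rewrite hadjE.
rewrite exchange_big; apply: eq_bigr => i _.
rewrite -big_mkcond (reindex_onto (fupd z i) (fun x => x i)) /=; last first.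
  by move=> x; rewrite diff_set1 => /andP[_ /eqP <-].
by apply: eq_bigl => b; rewrite diff_set1 !ffunE eqxx /= !eqxx !andbT.
Qed.

End HammingGraph.

Definition hweight n q (s : Xn n q.+1) : nat := #|[set i | s i != ord0]|.

Lemma hweight_le n q (s : Xn n q.+1) : (hweight s <= n)%nat.
Proof. by rewrite -[n in (_ <= n)%nat]card_ord max_card. Qed.

Lemma hweight_x0 n q : hweight (x0 n q) = 0%nat.
Proof. by apply/eqP; rewrite cards_eq0; apply/eqP/setP => i; rewrite !inE ffunE eqxx. Qed.

Lemma sum_pow_hweight n q (y : R) :
  \big[Rplus/0]_(s : Xn n q.+1) y ^ hweight s = (1 + INR q * y) ^ n.
Proof.
transitivity (\big[Rplus/0]_(s : {ffun 'I_n -> 'I_q.+1})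
                \big[Rmult/1]_i (if s i != ord0 then y else 1)).
  apply: eq_bigr => s _; rewrite /hweight -prodR_const big_mkcond /=.
  by apply: eq_bigr => i _; rewrite inE.
rewrite -(bigA_distr_bigA (fun _ (b : 'I_q.+1) => if b != ord0 then y else 1)).
rewrite -[n in RHS]card_ord -prodR_const; apply: eq_bigr => i _.
by rewrite big_ord_recl eqxx (eq_bigr (fun _ => y)) //= sumR_const card_ord.
Qed.

Lemma card_Xn n q : INR #|Xn n q| = INR q ^ n.
Proof. by rewrite card_ffun !card_ord INR_expn. Qed.

Lemma exp_pow u m : exp u ^ m = exp (INR m * u).
Proof.
elim: m => [|m IH]; first by rewrite /= Rmult_0_l exp_0.
by rewrite S_INR [exp u ^ m.+1]/= IH -exp_plus; congr exp; ring.
Qed.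

Lemma pow_exp_ln x m : 0 < x -> x ^ m = exp (INR m * ln x).
Proof. by move=> x_gt0; rewrite -exp_pow exp_ln. Qed.

Lemma exp_le_mono x y : x <= y -> exp x <= exp y.
Proof. by case/Rle_lt_or_eq_dec => [/exp_increasing/Rlt_le | ->] //; apply: Rle_refl. Qed.

Lemma ln_le_mono x y : 0 < x -> x <= y -> ln x <= ln y.
Proof.
by move=> x_gt0; case/Rle_lt_or_eq_dec => [/(ln_increasing _ _ x_gt0)/Rlt_le | ->] //;
  apply: Rle_refl.
Qed.

Lemma one_plus_div_pow_le_exp x m : (0 < m)%nat -> 0 <= x -> (1 + x / INR m) ^ m <= exp x.
Proof.
move=> m_gt0 x_ge0; have mR_gt0 : 0 < INR m by apply: lt_0_INR; apply/ltP.
have base_ge0 : 0 <= 1 + x / INR m.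
  by have := Rle_mult_inv_pos _ _ x_ge0 mR_gt0; rewrite /Rdiv; lra.
apply: Rle_trans (pow_incr _ _ m (conj base_ge0 (exp_ineq1_le _))) _.
by rewrite exp_pow; right; congr exp; field; lra.
Qed.

(* A nonnegative [t] is at most [exp (t - 1)]; a negative one has [t^2 <= 1/9]. *)
Lemma pow_sqr_le_exp t k :
  - / 3 <= t <= 1 -> t ^ k * t ^ k <= exp (- (2 * INR k * (1 - t))) + (/ 9) ^ k.
Proof.
move=> [t_ge t_le1]; rewrite -Rpow_mult_distr.
have exp_gt0 := exp_pos (- (2 * INR k * (1 - t))).
have inv9_pow_ge0 : 0 <= (/ 9) ^ k by apply: pow_le; lra.
case: (Rle_lt_dec 0 t) => [t_ge0 | t_lt0].
  have t_le : t <= exp (t - 1) by have := exp_ineq1_le (t - 1); lra.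
  have sqr_le : 0 <= t * t <= exp (- (2 * (1 - t))).
    split; first by nra.
    rewrite (_ : - (2 * (1 - t)) = (t - 1) + (t - 1)); last by ring.
    by rewrite exp_plus; apply: Rmult_le_compat.
  apply: Rle_trans (pow_incr _ _ k sqr_le) _; rewrite exp_pow.
  by rewrite (_ : INR k * - (2 * (1 - t)) = - (2 * INR k * (1 - t))); [lra | ring].
have : (t * t) ^ k <= (/ 9) ^ k by apply: pow_incr; nra.
lra.
Qed.

Lemma ln3_ge1 : 1 <= ln 3.
Proof. by rewrite -{1}(ln_exp 1); apply: ln_le_mono; [exact: exp_pos | exact: exp_le_3]. Qed.

(* For [n >= 3] this rests on [ln (3 n) >= ln 9] and [2^8 <= 3^6]. *)
Lemma ln_3n_bound n :
  (2 <= n)%nat -> 2 * INR n * ln 2 <= 3 * ln 2 + 3 * INR n / 4 * ln (3 * INR n).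
Proof.
move=> n_ge2.
have ln2_gt0 : 0 < ln 2 by rewrite -ln_1; apply: ln_increasing; lra.
have ln3_ge := ln3_ge1.
case: (ltnP 2 n) => [n_ge3 | n_le2].
  have nR_ge3 : 3 <= INR n by have := le_INR 3 n (elimT leP n_ge3); rewrite /=; lra.
  have ln_ge : 2 * ln 3 <= ln (3 * INR n).
    by rewrite (_ : 2 * ln 3 = ln (3 * 3)); [apply: ln_le_mono | rewrite ln_mult]; lra.
  have ln2_ln3 : 8 * ln 2 <= 6 * ln 3.
    have := @ln_le_mono (2 ^ 8) (3 ^ 6) (pow_lt _ _ Rlt_0_2) ltac:(simpl; lra).
    by rewrite !ln_pow; [simpl | lra | lra]; lra.
  have := Rmult_le_pos (INR n) (ln (3 * INR n) - 2 * ln 3) (pos_INR n) ltac:(lra).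
  nra.
have -> : n = 2%nat by apply/anti_leq/andP.
rewrite (_ : 3 * INR 2 = 2 * 3); last by simpl; lra.
by rewrite ln_mult; simpl; lra.
Qed.

Lemma pow4_inv9_le n k c : (2 <= n)%nat -> 0 <= c ->
  INR k = 3 * INR n / 8 * (ln (3 * INR n) + c) ->
  4 ^ n * (/ 9) ^ k <= 8 * exp (- c).
Proof.
move=> n_ge2 c_ge0 k_def.
have nR_ge2 : 2 <= INR n by have := le_INR 2 n (elimT leP n_ge2); rewrite /=; lra.
have ln2_gt0 : 0 < ln 2 by rewrite -ln_1; apply: ln_increasing; lra.
have ln3n_ge0 : 0 <= ln (3 * INR n) by rewrite -ln_1; apply: ln_le_mono; lra.
have ln4 : ln 4 = 2 * ln 2 by rewrite (_ : 4 = 2 * 2) ?ln_mult; lra.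
have ln8 : ln 8 = 3 * ln 2 by rewrite (_ : 8 = 2 * 2 * 2) ?ln_mult; lra.
have ln_inv9 : ln (/ 9) = - (2 * ln 3) by rewrite ln_Rinv (_ : 9 = 3 * 3) ?ln_mult; lra.
rewrite !pow_exp_ln; try lra.
rewrite -{1}[8]exp_ln; last lra.
rewrite -!exp_plus ln4 ln8 ln_inv9; apply: exp_le_mono.
have ln3_ge := ln3_ge1; have bound := ln_3n_bound n_ge2.
have := Rmult_le_pos (INR k) (ln 3 - 1) (pos_INR k) ltac:(lra).
have := Rmult_le_pos (3 * INR n / 4 - 1) c ltac:(lra) c_ge0.
rewrite k_def; nra.
Qed.

Lemma mixing_bound n k c : (2 <= n)%nat -> 0 <= c ->
  INR k = 3 * INR n / 8 * (ln (3 * INR n) + c) ->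
  / 4 * ((1 + 3 * exp (- (8 * INR k / (3 * INR n)))) ^ n - 1 + 4 ^ n * (/ 9) ^ k)
  <= 9 / 4 * (exp (exp (- c)) - 1).
Proof.
move=> n_ge2 c_ge0 k_def.
have nR_ge2 : 2 <= INR n by have := le_INR 2 n (elimT leP n_ge2); rewrite /=; lra.
have -> : 3 * exp (- (8 * INR k / (3 * INR n))) = exp (- c) / INR n.
  rewrite k_def (_ : - (8 * (3 * INR n / 8 * (ln (3 * INR n) + c)) / (3 * INR n))
                     = - ln (3 * INR n) + - c); last by field; lra.
  by rewrite exp_plus exp_Ropp exp_ln; [field | ]; lra.
have n_gt0 : (0 < n)%nat by apply: leq_trans n_ge2.
have := one_plus_div_pow_le_exp n_gt0 (Rlt_le _ _ (exp_pos (- c))).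
have := pow4_inv9_le n_ge2 c_ge0 k_def.
have := exp_ineq1_le (exp (- c)).
lra.
Qed.

(* The characters of (Z/2)^2, reading [a : 'I_4] as the pair of bits of [a]. *)
Definition walsh4 (a b : 'I_4) : R :=
  if (odd a && odd b) (+) (odd a./2 && odd b./2) then -1 else 1.

Lemma walsh4C a b : walsh4 a b = walsh4 b a.
Proof. by rewrite /walsh4 andbC (andbC (odd a./2)). Qed.

Lemma walsh4_0 a : walsh4 a ord0 = 1.
Proof. by rewrite /walsh4 /= !andbF. Qed.

Lemma walsh4_sqr a b : walsh4 a b * walsh4 a b = 1.
Proof. by rewrite /walsh4; case: ifP => _; ring. Qed.

Lemma walsh4_orth b b' :
  \big[Rplus/0]_a (walsh4 a b * walsh4 a b') = if b == b' then 4 else 0.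
Proof.
rewrite !big_ord_recl big_ord0 /walsh4 /=.
by case: b => [[|[|[|[|b]]]] ?] //; case: b' => [[|[|[|[|b']]]] ?] //=; lra.
Qed.

Lemma walsh4_neighbour_sum a b0 :
  \big[Rplus/0]_(b | b != b0) (walsh4 a b * walsh4 a b0) =
  if a == ord0 then 3 else -1.
Proof.
rewrite big_mkcond !big_ord_recl big_ord0 /walsh4 /=.
by case: a => [[|[|[|[|a]]]] ?] //; case: b0 => [[|[|[|[|b]]]] ?] //=; lra.
Qed.

Section WalkOnH4.
Variable n : nat.
Hypothesis n_gt0 : (0 < n)%nat.

Let nR_gt0 : 0 < INR n.
Proof. by apply: lt_0_INR; apply/ltP. Qed.

Definition walsh (s x : Xn n 4) : R := prod_char walsh4 s x.

Lemma walshC s x : walsh s x = walsh x s.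
Proof. by apply: eq_bigr => i _; rewrite walsh4C. Qed.

Lemma walsh_x0 s : walsh s (x0 n 3) = 1.
Proof. by rewrite /walsh /prod_char big1 // => i _; rewrite ffunE walsh4_0. Qed.

Lemma walsh_orth x y :
  \big[Rplus/0]_s (walsh s x * walsh s y) = if x == y then 4 ^ n else 0.
Proof. by have := prod_char_orth walsh4_orth x y; rewrite card_ord. Qed.

Lemma sum_walsh s : \big[Rplus/0]_x walsh s x = if s == x0 n 3 then 4 ^ n else 0.
Proof.
by rewrite -walsh_orth; apply: eq_bigr => x _; rewrite walsh_x0 Rmult_1_r walshC.
Qed.

Definition eigval (s : Xn n 4) : R := 1 - 4 * INR (hweight s) / (3 * INR n).

Lemma eigval_x0 : eigval (x0 n 3) = 1.
Proof. by rewrite /eigval hweight_x0 /=; field; lra. Qed.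

Lemma eigval_bounds s : - / 3 <= eigval s <= 1.
Proof.
have := pos_INR (hweight s); have := le_INR _ _ (elimT leP (hweight_le s)).
by rewrite /eigval; split; apply: (Rmult_le_reg_r (3 * INR n)); try field_simplify; lra.
Qed.

Lemma sum_walsh4_neighbours (s : Xn n 4) :
  \big[Rplus/0]_i (if s i == ord0 then 3 else -1) = 3 * INR n - 4 * INR (hweight s).
Proof.
transitivity (\big[Rplus/0]_i
                (3 - 4 * (if i \in [set j | s j != ord0] then 1 else 0))).
  by apply: eq_bigr => i _; rewrite inE; case: (s i == ord0) => /=; ring.
rewrite sumRB -big_distrr /= sumR_const card_ord.
by rewrite (sumR_indicator [set j | s j != ord0]) /hweight; ring.
Qed.

Lemma walk_eigen s z :
  \big[Rplus/0]_x (pstep z x * walsh s x) = eigval s * walsh s z.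
Proof.
transitivity (\big[Rplus/0]_x (if hadj z x then walsh s x / (3 * INR n) else 0)).
  apply: eq_bigr => x _; rewrite /pstep; case: hadj; last by ring.
  have -> : INR (4 - 1) = 3 by rewrite /=; lra.
  by field; lra.
rewrite sum_hadj.
transitivity (\big[Rplus/0]_i ((\big[Rplus/0]_(b | b != z i)
                 (walsh4 (s i) b * walsh4 (s i) (z i))) * (walsh s z / (3 * INR n)))).
  apply: eq_bigr => i _; rewrite big_distrl; apply: eq_bigr => b _ /=.
  by rewrite /walsh prod_char_fupd; [exact: Rmult_assoc | exact: walsh4_sqr].
under eq_bigr do rewrite walsh4_neighbour_sum.
by rewrite -big_distrl /= sum_walsh4_neighbours /eigval; field; lra.
Qed.

Lemma fourier_nuk k s : fourier walsh (@nuk n 3 k) s = eigval s ^ k.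
Proof.
elim: k => [|k IH].
  rewrite /fourier (eq_bigr (fun x => if x == x0 n 3 then walsh s x else 0)).
    by rewrite -big_mkcond big_pred1_eq walsh_x0.
  by move=> x _; rewrite /nuk /= eq_sym; case: (x == x0 n 3); ring.
transitivity (\big[Rplus/0]_z (@nuk n 3 k z * (eigval s * walsh s z))).
  rewrite /fourier /nuk /=; under eq_bigr do rewrite big_distrl /=.
  rewrite exchange_big; apply: eq_bigr => z _ /=.
  by rewrite -walk_eigen big_distrr; apply: eq_bigr => x _ /=; ring.
rewrite [RHS]/= -IH /fourier big_distrr; apply: eq_bigr => z _ /=; ring.
Qed.

Variable k : nat.

Definition dev (x : Xn n 4) : R := @nuk n 3 k x - @unif n 4 x.

Lemma fourier_dev s :
  fourier walsh dev s = eigval s ^ k - (if s == x0 n 3 then 1 else 0).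
Proof.
have four_pow_neq0 : 4 ^ n <> 0 by apply: pow_nonzero; lra.
transitivity (fourier walsh (@nuk n 3 k) s - / 4 ^ n * \big[Rplus/0]_x walsh s x).
  rewrite big_distrr /= -sumRB; apply: eq_bigr => x _.
  by rewrite /dev /unif pow_INR (_ : INR 4 = 4) /=; [field | lra].
by rewrite fourier_nuk sum_walsh; case: eqP => _; field.
Qed.

Lemma sum_dev : \big[Rplus/0]_x dev x = 0.
Proof.
have := fourier_dev (x0 n 3); rewrite eqxx eigval_x0 pow1 Rminus_diag /fourier.
by under eq_bigr do rewrite walshC walsh_x0 Rmult_1_r.
Qed.

Lemma sum_fourier_dev_sqr_le :
  \big[Rplus/0]_s (fourier walsh dev s * fourier walsh dev s) <=
  (1 + 3 * exp (- (8 * INR k / (3 * INR n)))) ^ n - 1 + 4 ^ n * (/ 9) ^ k.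
Proof.
set y := exp (- (8 * INR k / (3 * INR n))).
have inv9_ge0 : 0 <= (/ 9) ^ k by apply: pow_le; lra.
have term_le s : fourier walsh dev s * fourier walsh dev s <=
    y ^ hweight s + (/ 9) ^ k - (if s == x0 n 3 then 1 else 0).
  rewrite fourier_dev; case: eqP => [->|_].
    by rewrite eigval_x0 hweight_x0 pow1 /=; lra.
  rewrite !Rminus_0_r /y exp_pow.
  have -> : INR (hweight s) * - (8 * INR k / (3 * INR n)) =
            - (2 * INR k * (1 - eigval s)) by rewrite /eigval; field; lra.
  exact: pow_sqr_le_exp (eigval_bounds s).
apply: Rle_trans (ler_sumR term_le) _; right.
rewrite sumRB big_split /= (sum_pow_hweight n 3) sumR_const (card_Xn n 4).
have -> : INR 3 = 3 by rewrite /=; lra.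
have -> : INR 4 = 4 by rewrite /=; lra.
by rewrite (bigD1 (x0 n 3)) //= eqxx big1 => [|s /negPf -> //]; ring.
Qed.

Lemma sqr_dev_in_le (S : {set Xn n 4}) :
  (\big[Rplus/0]_(x in S) dev x) ^ 2 <=
  / 4 * ((1 + 3 * exp (- (8 * INR k / (3 * INR n)))) ^ n - 1 + 4 ^ n * (/ 9) ^ k).
Proof.
have four_pow_gt0 : 0 < 4 ^ n by apply: pow_lt; lra.
apply: Rle_trans (sqr_sum_in_le_card S sum_dev) _.
rewrite (plancherel (Rgt_not_eq _ _ four_pow_gt0) walsh_orth) (card_Xn n 4).
have -> : INR 4 = 4 by rewrite /=; lra.
have -> : forall u, 4 ^ n / 4 * (/ 4 ^ n * u) = / 4 * u by move=> u; field; lra.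
by apply: Rmult_le_compat_l; [lra | exact: sum_fourier_dev_sqr_le].
Qed.

End WalkOnH4.

Local Close Scope R_scope.

Theorem theorem1p2 (n : nat) (c : R) (k : nat) :
  (2 <= n)%N -> (0 < c)%R ->
  INR k = (3 * INR n / 8 * (ln (3 * INR n) + c))%R ->
  (tvdist (@nuk n 3 k) (@unif n 4) ^ 2 <= 9 / 4 * (exp (exp (- c)) - 1))%R.
Proof.
move=> n_ge2 c_gt0 k_def.
have n_gt0 : (0 < n)%N by apply: leq_trans n_ge2.
apply: tvdist_sqr_le => S; rewrite -sumRB.
apply: Rle_trans (sqr_dev_in_le n_gt0 k S) _.
exact: mixing_bound n_ge2 (Rlt_le _ _ c_gt0) k_def.
Qed.
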